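(* Let $1\le d<n$ be integers. Then there exists an independent set $\mathcal{A}\subseteq\mathcal{A}(n,d)$ with $|\mathcal{A}|=\binom{n-1}{d}$.
   Context: For integers $1\le d<n$, let $I(n,d)$ be the set of all subsets of $[n]=\{1,\dots,n\}$ of cardinality $d+1$. For $I\in I(n,d)$, let $A_I$ be the set of all $d$-tuples with pairwise distinct entries taken from $I$ (so $|A_I|=(d+1)!$), and let $\mathcal{A}(n,d)=\{A_I : I\in I(n,d)\}$. For $\mathcal{A}\subseteq\mathcal{A}(n,d)$, a $d$-tuple $t$ is called unique with respect to $\mathcal{A}$ if there exists $A\in\mathcal{A}$ with $t\in A$ and $t\notin A'$ for every $A'\in\mathcal{A}\setminus\{A\}$. A set $\mathcal{A}\subseteq\mathcal{A}(n,d)$ is called independent if every nonempty subset of $\mathcal{A}$ has at least one $d$-tuple that is unique with respect to that subset. *)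

(* The ground set [n] = {1..n} is modelled by 'I_n = {0..n-1}. *)
From mathcomp Require Import all_boot.
Set Implicit Arguments. Unset Strict Implicit. Unset Printing Implicit Defensive.

Definition A_I (n d : nat) (I : {set 'I_n}) : {set d.-tuple 'I_n} :=
  [set t : d.-tuple 'I_n | uniq t && all (fun x => x \in I) t].

Definition calA (n d : nat) : {set {set d.-tuple 'I_n}} :=
  [set A_I d I | I in [set I : {set 'I_n} | #|I| == d.+1]].

Definition unique_wrt (n d : nat) (F : {set {set d.-tuple 'I_n}}) (t : d.-tuple 'I_n) : Prop :=
  exists2 A, A \in F & (t \in A) /\ forall A', A' \in F -> A' != A -> t \notin A'.

Definition independent (n d : nat) (F : {set {set d.-tuple 'I_n}}) : Prop :=
  forall G : {set {set d.-tuple 'I_n}}, G \subset F -> G != set0 ->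
    exists t : d.-tuple 'I_n, unique_wrt G t.

From mathcomp Require Import all_boot.

(* Work on [n] = 'I_m.+1 and fix the point 0.  The "star" family
   consists of the sets A_I with 0 \in I, i.e. I = 0 |: J for a d-subset J of
   [n] \ {0}; there are 'C(m, d) = 'C(n - 1, d) of them.  Each member A_I has a
   private tuple: the increasing enumeration of J lies in A_{0 |: J'} only if
   J \subset 0 |: J', which (0 \notin J, equal sizes) forces J' = J. *)

Set Implicit Arguments.
Unset Strict Implicit.
Unset Printing Implicit Defensive.

(* A tuple lying in one member of F and in no other one witnesses uniqueness
   in every subfamily containing that member; hence families all of whose
   members have such a private tuple are independent. *)
Lemma private_tuples_independent (n d : nat) (F : {set {set d.-tuple 'I_n}}) :
  (forall A, A \in F ->
     exists2 t : d.-tuple 'I_n, t \in A & forall A', A' \in F -> t \in A' -> A' = A) ->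
  independent F.
Proof.
move=> priv G sGF /set0Pn[A AG].
have [t tA tpriv] := priv A (subsetP sGF A AG).
exists t; exists A => //; split => // A' A'G.
by apply: contra => tA'; apply/eqP/tpriv => //; apply: (subsetP sGF).
Qed.

Lemma enum_tuple_exists (n d : nat) (J : {set 'I_n}) :
  #|J| = d -> exists t : d.-tuple 'I_n, val t = enum J.
Proof.
move=> cJ; have sz : size (enum J) == d by rewrite -cardE cJ.
by exists (Tuple sz).
Qed.

Lemma enum_tuple_in_A_I (n d : nat) (J I : {set 'I_n}) (t : d.-tuple 'I_n) :
  val t = enum J -> (t \in A_I d I) = (J \subset I).
Proof.
move=> tJ; rewrite inE tJ enum_uniq /=.
apply/allP/subsetP => sub x; last by rewrite mem_enum => /sub.
by move=> xJ; apply: sub; rewrite mem_enum.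
Qed.

Lemma subset_setU1_eq (T : finType) (x : T) (J J' : {set T}) :
  x \notin J -> #|J'| <= #|J| -> J \subset x |: J' -> J = J'.
Proof.
move=> xJ cJ' /subsetP sJ; apply/eqP; rewrite eqEcard cJ' andbT.
apply/subsetP => y yJ; move: (sJ y yJ); rewrite in_setU1 => /orP[/eqP yx|//].
by rewrite -yx yJ in xJ.
Qed.

Section Star.

Variables m d : nat.
Local Notation T := 'I_m.+1.

Definition petals : {set {set T}} :=
  [set J : {set T} | (J \subset [set~ ord0]) && (#|J| == d)].

Definition star_family : {set {set d.-tuple T}} :=
  [set A_I d (ord0 |: J) | J in petals].

Lemma petalsP (J : {set T}) : J \in petals -> ord0 \notin J /\ #|J| = d.
Proof.
rewrite inE => /andP[/subsetP sJ /eqP cJ]; split => //.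
by apply/negP => /sJ; rewrite !inE eqxx.
Qed.

Lemma petal_private_tuple (J : {set T}) : J \in petals ->
  exists2 t : d.-tuple T, t \in A_I d (ord0 |: J) &
    forall J', J' \in petals -> t \in A_I d (ord0 |: J') -> J = J'.
Proof.
move=> /petalsP[J0 cJ]; have [t tJ] := enum_tuple_exists cJ.
exists t; first by rewrite (enum_tuple_in_A_I _ tJ) subsetUr.
move=> J' /petalsP[_ cJ']; rewrite (enum_tuple_in_A_I _ tJ).
by apply: subset_setU1_eq; rewrite // cJ cJ'.
Qed.

Lemma petal_A_I_inj : {in petals &, injective (fun J => A_I d (ord0 |: J))}.
Proof.
move=> J J' JP J'P eA; have [t tJ tpriv] := petal_private_tuple JP.
by apply: tpriv; rewrite // -eA.
Qed.

Lemma star_family_independent : independent star_family.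
Proof.
apply: private_tuples_independent => _ /imsetP[J JP ->].
have [t tJ tpriv] := petal_private_tuple JP.
exists t => // _ /imsetP[J' J'P ->] tJ'.
by rewrite (tpriv J').
Qed.

Lemma star_family_sub_calA : star_family \subset calA m.+1 d.
Proof.
apply/subsetP => _ /imsetP[J /petalsP[J0 cJ] ->].
by apply/imsetP; exists (ord0 |: J); rewrite // inE cardsU1 J0 cJ.
Qed.

Lemma card_star_family : #|star_family| = 'C(m, d).
Proof.
by rewrite card_in_imset; [rewrite cards_draws cardsC1 card_ord | exact: petal_A_I_inj].
Qed.

End Star.

Theorem mainTheorem4 (n d : nat) (hd : 1 <= d) (hdn : d < n) :
  exists F : {set {set d.-tuple 'I_n}},
    [/\ F \subset calA n d, independent F & #|F| = 'C(n.-1, d)].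
Proof.
case: n hdn => [//|m] _.
exists (star_family m d); split.
- exact: star_family_sub_calA.
- exact: star_family_independent.
- exact: card_star_family.
Qed.
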